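(* For every $n\ge1$, the set $\mathrm{StoRec}_n$ of SR states on $K_n^0$ equals $\mathrm{conv}(\mathrm{DetRec}_n)\cap\mathbb{Z}^n$, where $\mathrm{DetRec}_n$ is the set of DR states on $K_n^0$. That is, $c\in\mathbb{Z}_{\ge 0}^n$ is SR if and only if there exist DR states $c^{(1)},\dots,c^{(k)}$ and $\lambda_1,\dots,\lambda_k\in[0,1]$ with $\sum_i\lambda_i=1$ and $c=\sum_i\lambda_i c^{(i)}$.
   Context: $K_n^0$ is the complete graph on vertex set $\{0,1,\dots,n\}$ with sink $0$; every vertex has degree $n$. A configuration is $c\in\mathbb{Z}_{\ge0}^n$, stable if $c_i\le n-1$ for all $i$. ASM: an unstable vertex topples by sending one grain to each neighbour (grains to the sink disappear). SSM (parameter $p\in(0,1)$): an unstable vertex $i$, independently for each incident edge, sends one grain along it with probability $p$, otherwise keeps it. Each model gives a Markov chain on stable configurations: add a grain at vertex $i$ with probability $\mu_i>0$, then stabilise. DR = recurrent for the ASM chain, SR = recurrent for the SSM chain. $\mathrm{conv}$ denotes convex hull in $\mathbb{R}^n$. *)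

From HB Require Import structures.
From mathcomp Require Import all_boot all_order all_algebra.
From mathcomp Require Import reals.
Set Implicit Arguments. Unset Strict Implicit. Unset Printing Implicit Defensive.
Import Order.TTheory GRing.Theory Num.Theory.

(* Sandpiles on K_n^0: non-sink vertices are 'I_n (standing for 1..n), the
   sink 0 is treated separately.  Every vertex has degree n.
   A configuration is a vector in Z_{>=0}^n. *)
Definition config (n : nat) := {ffun 'I_n -> nat}.

Definition stable n (c : config n) : Prop := forall i, c i <= n.-1.

Definition add_grain n (c : config n) (i : 'I_n) : config n :=
  [ffun j => c j + (j == i)].

(* ASM toppling of an unstable vertex i: i loses n grains, every other
   non-sink vertex gains one (one grain goes to the sink and vanishes). *)
Definition asm_topple n (c d : config n) : Prop :=
  exists i : 'I_n, n <= c i /\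
    d = [ffun j => if j == i then c j - n else c j + 1].

(* SSM toppling of an unstable vertex i: for each incident edge the grain is
   sent or kept; S is the set of non-sink neighbours receiving a grain, and
   b says whether a grain is sent along the edge to the sink.  Since
   p in (0,1), every such choice has positive probability. *)
Definition ssm_topple n (c d : config n) : Prop :=
  exists (i : 'I_n) (S : {set 'I_n}) (b : bool),
    [/\ n <= c i, i \notin S &
      d = [ffun j => if j == i then c j - (#|S| + b) else c j + (j \in S)]].

Inductive star (T : Type) (r : T -> T -> Prop) : T -> T -> Prop :=
| star_refl x : star r x x
| star_step x y z : r x y -> star r y z -> star r x z.

(* Support of the Markov chain transition kernel: add a grain at some vertex
   i (mu_i > 0 for all i) and stabilise with the given toppling rule. *)
Definition chain_step n (topple : config n -> config n -> Prop)
  (c d : config n) : Prop :=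
  exists i : 'I_n, star topple (add_grain c i) d /\ stable d.

(* Recurrent state of a finite Markov chain on stable configurations:
   every state reachable from c leads back to c (c lies in a closed
   communicating class). *)
Definition recurrent n (topple : config n -> config n -> Prop)
  (c : config n) : Prop :=
  stable c /\
  forall d, star (chain_step topple) c d -> star (chain_step topple) d c.

Definition DR n (c : config n) : Prop := recurrent (@asm_topple n) c.
Definition SR n (c : config n) : Prop := recurrent (@ssm_topple n) c.

Local Open Scope ring_scope.
Definition in_conv_DR (R : realType) n (c : config n) : Prop :=
  exists (k : nat) (cs : 'I_k -> config n) (lam : 'I_k -> R),
    [/\ forall l, DR (cs l),
        forall l, 0 <= lam l <= 1,
        \sum_(l < k) lam l = 1 &
        forall v : 'I_n, ((c v)%:R : R) = \sum_(l < k) lam l * (cs l v)%:R].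

From mathcomp Require Import all_boot all_order all_algebra reals.
From mathcomp Require Import zify lra.

Set Implicit Arguments. Unset Strict Implicit. Unset Printing Implicit Defensive.
Import Order.TTheory GRing.Theory Num.Theory.

(* SR states and points of the convex hull of DR states are both exactly the
   stable configurations satisfying Landau's condition: every set A of
   vertices carries at least C(|A|, 2) grains.  The condition holds for the
   full configuration and survives adding grains and stochastic topplings,
   of which deterministic topplings are a special case; so it holds for all
   SR and DR states, and, being linear, for convex combinations of DR states.
   Conversely, let c be stable and satisfy it.  By Landau's theorem c
   dominates the score vector of a tournament; starting from the full
   configuration, the stochastic model can drop the vertices one at a time
   until that score vector is reached, and then add grains up to c, so c is
   SR.  Stable configurations whose k-th smallest value is at least k - 1
   are DR (adding a grain at a full vertex makes every vertex topple once).
   Otherwise two vertices u, v carry the same value 0 < c u < n - 1, and c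
   is the midpoint of c + e_u - e_v and c - e_u + e_v, which satisfy the
   condition again and have a larger sum of squares; by induction c lies in
   the convex hull of the DR states. *)

Lemma star_trans T (r : T -> T -> Prop) x y z :
  star r x y -> star r y z -> star r x z.
Proof. by elim=> [//|a b e Hab _ IH] /IH; apply: star_step. Qed.

Lemma star_one T (r : T -> T -> Prop) x y : r x y -> star r x y.
Proof. by move=> H; apply: star_step H (star_refl _ _). Qed.

Lemma star_mono T (r r' : T -> T -> Prop) x y :
  (forall a b, r a b -> r' a b) -> star r x y -> star r' x y.
Proof.
move=> H; elim=> [a|a b e Hab _ IH]; first exact: star_refl.
exact: star_step (H _ _ Hab) IH.
Qed.

Lemma star_inv T (r : T -> T -> Prop) (P : T -> Prop) x y :
  (forall a b, r a b -> P a -> P b) -> star r x y -> P x -> P y.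
Proof. by move=> HP; elim=> // a b e Hab _ IH /(HP _ _ Hab). Qed.

Lemma sum_mem_card (T : finType) (A B : {set T}) :
  \sum_(x in A) (x \in B : nat) = #|A :&: B|.
Proof.
rewrite -sum1_card big_mkcond /= [RHS]big_mkcond /=; apply: eq_bigr => x _.
by rewrite inE; case: (x \in A); case: (x \in B).
Qed.

Lemma sum_eq_mem (T : finType) (A : {set T}) v :
  \sum_(w in A) (w == v : nat) = (v \in A).
Proof.
have [HvA|HvA] := boolP (v \in A).
  by rewrite (bigD1 v) //= eqxx big1 // => w /andP [_ /negbTE ->].
by rewrite big1 // => w Hw; case: eqVneq Hw HvA => // ->->.
Qed.

Lemma card_le_inj_bound (T : finType) (L : {set T}) (f : T -> nat) k :
  {in L &, injective f} -> (forall x, x \in L -> f x < k) -> #|L| <= k.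
Proof.
move=> Hinj Hk; rewrite cardE -(size_map f) -[k](size_iota 0).
apply: uniq_leq_size => [|_ /mapP [x Hx ->]].
  by rewrite map_inj_in_uniq ?enum_uniq // => x y; rewrite !mem_enum; exact: Hinj.
by rewrite mem_iota add0n Hk // -mem_enum.
Qed.

Section Configurations.
Variable n : nat.
Implicit Types (t : config n -> config n -> Prop) (c d x y : config n).

Definition cmax : config n := [ffun _ => n.-1].

Definition csum c := \sum_(i < n) c i.

Lemma csum_add_grain c i : csum (add_grain c i) = (csum c).+1.
Proof.
rewrite /csum (eq_bigr (fun j => c j + (j == i))) => [|j _]; last by rewrite ffunE.
rewrite big_split /= [X in _ + X](bigD1 i) //= eqxx.
rewrite [X in _ + (_ + X)]big1 => [|j /negbTE ->] //.
by rewrite addn0 addn1.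
Qed.

Lemma csum_ltn c d i : (forall j, c j <= d j) -> c i < d i -> csum c < csum d.
Proof.
move=> Hle Hi; rewrite /csum (bigD1 i) //= [X in _ < X](bigD1 i) //=.
by rewrite -addSn leq_add //; apply: leq_sum.
Qed.

Lemma chain_step_stable t c d : chain_step t c d -> stable d.
Proof. by case=> i []. Qed.

Lemma reach_by_adding_grains t x y : stable y -> (forall i, x i <= y i) ->
  star (chain_step t) x y.
Proof.
move=> Hy; move Hk : (csum y - csum x) => k.
elim/ltn_ind: k x Hk => k IH x Hk Hxy.
case: (pickP (fun i => x i < y i)) => [i Hi|Hnone]; last first.
  suff -> : x = y by exact: star_refl.
  by apply/ffunP => j; apply/eqP; rewrite eqn_leq Hxy leqNgt Hnone.
have Hx'y j : add_grain x i j <= y j.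
  by rewrite ffunE; case: eqP => [->|_]; rewrite ?addn1 ?addn0.
have Hcsum : csum (add_grain x i) <= csum y by apply: leq_sum => j _.
apply: star_step (IH _ _ _ erefl Hx'y).
  by exists i; split; [exact: star_refl | move=> j; exact: leq_trans (Hy j)].
by move: Hcsum Hk; rewrite csum_add_grain; lia.
Qed.

Lemma recurrent_from_cmax t c :
  recurrent t c <-> stable c /\ star (chain_step t) cmax c.
Proof.
have to_cmax z : stable z -> star (chain_step t) z cmax.
  by move=> Hz; apply: reach_by_adding_grains => [i|i]; rewrite ffunE.
split=> [[Hc H]|[Hc H]]; first by split=> //; apply/H/to_cmax.
split=> // d Hd; apply: star_trans H; apply: to_cmax.
exact: star_inv (fun a b H _ => chain_step_stable H) Hd Hc.
Qed.

End Configurations.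

Section Landau.
Variable n : nat.
Implicit Types (c d : config n).

Definition landau c := forall A : {set 'I_n}, 'C(#|A|, 2) <= \sum_(v in A) c v.

Lemma landau_cmax : landau (cmax n).
Proof.
move=> A; rewrite (eq_bigr (fun _ => n.-1)) => [|j _]; last by rewrite ffunE.
have HA : #|A| <= n by have := max_card (mem A); rewrite card_ord.
rewrite sum_nat_const bin2 -divn2; apply: leq_trans (leq_div _ _) _.
apply: leq_mul => //; lia.
Qed.

Lemma landau_add_grain c i : landau c -> landau (add_grain c i).
Proof.
by move=> Hc A; apply: (leq_trans (Hc A)); apply: leq_sum => j _; rewrite ffunE leq_addr.
Qed.

Lemma landau_ssm_topple c d : ssm_topple c d -> landau c -> landau d.
Proof.
move=> [i [S [b [Hi HiS ->]]]] Hc A.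
have [HiA|HiA] := boolP (i \in A); last first.
  apply: (leq_trans (Hc A)); apply: leq_sum => j Hj; rewrite ffunE.
  case: eqP => [Eji|_]; last exact: leq_addr.
  by move: HiA; rewrite -Eji Hj.
have sumB : \sum_(j in A :\ i)
    [ffun j => if j == i then c j - (#|S| + b) else c j + (j \in S)] j
    = \sum_(j in A :\ i) c j + #|S :&: (A :\ i)|.
  rewrite setIC -sum_mem_card -big_split /=; apply: eq_bigr => j.
  by rewrite !inE ffunE => /andP [/negbTE ->].
have HAB : #|A| = #|A :\ i|.+1 by rewrite [#|A|](cardsD1 i) HiA.
have HSB := cardsID (A :\ i) S.
have HSA : #|S :\: (A :\ i)| <= #|~: A|.
  apply/subset_leq_card/subsetP => j; rewrite !inE => /andP [HjB HjS].
  by apply: contra HjB => ->; rewrite andbT; apply: contraNneq HiS => <-.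
have HA := cardsC A; rewrite card_ord in HA.
have HS : #|S| <= n.-1.
  have <- : #|[set~ i]| = n.-1 by rewrite cardsC1 card_ord.
  apply/subset_leq_card/subsetP => j Hj.
  by rewrite !inE; apply: contraNneq HiS => <-.
have := Hc (A :\ i); rewrite (big_setD1 i HiA) /= ffunE eqxx sumB HAB binS bin1.
(* [set] merges card and sum terms that differ only in their coercion paths,
   which [lia] would otherwise treat as distinct atoms *)
by set s := \sum_(j in A :\ i) c j; set a := #|A :\ i|; set m := #|S|; lia.
Qed.

Lemma asm_ssm_topple c d : asm_topple c d -> ssm_topple c d.
Proof.
move=> [i [Hi ->]]; exists i, [set~ i], true; split => //; first by rewrite !inE eqxx.
apply/ffunP => j; rewrite !ffunE cardsC1 card_ord !inE.
by case: eqP => // _; congr (_ - _); have := ltn_ord i; lia.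
Qed.

Lemma landau_recurrent (t : config n -> config n -> Prop) c :
  (forall a b, t a b -> ssm_topple a b) -> recurrent t c -> landau c.
Proof.
move=> Ht /recurrent_from_cmax [_ Hc]; move: landau_cmax; apply: star_inv Hc.
move=> a b [i [Hab _]] /(landau_add_grain i); apply: star_inv (star_mono Ht Hab).
exact: landau_ssm_topple.
Qed.

End Landau.

Section Parking.
Variable n : nat.
Implicit Types (c d x : config n).

(* The recurrence criterion on K_n^0: the i-th smallest value of c is at least
   i - 1, i.e. n - 1 - c is a parking function. *)
Definition parking c := [forall k : 'I_n.+1, #|[set w | c w < k]| <= k].

Lemma parkingP c : reflect (forall k, #|[set w | c w < k]| <= k) (parking c).
Proof.
apply: (iffP forallP) => H k; last exact: H.
have [Hk|Hk] := leqP k n; first exact: (H (Ordinal (Hk : k < n.+1))).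
by apply: leq_trans (max_card _) _; rewrite card_ord ltnW.
Qed.

Lemma parkingPn c : ~~ parking c -> exists k, k < #|[set w | c w < k]|.
Proof. by case/forallPn => k; rewrite -ltnNge; exists k. Qed.

Lemma parking_top c : 0 < n -> stable c -> parking c -> exists i, c i = n.-1.
Proof.
move=> hn Hs /parkingP HP.
case: (pickP (fun w => c w == n.-1)) => [i /eqP Hi|Hnone]; first by exists i.
have := HP n.-1; suff -> : [set w | c w < n.-1] = setT by rewrite cardsT card_ord; lia.
by apply/setP => w; rewrite !inE ltn_neqAle Hnone Hs.
Qed.

Section Avalanche.
Variables (x : config n) (i : 'I_n).
Hypotheses (x_stable : stable x) (x_i : x i = n.-1).
Hypothesis x_strict : forall k, 0 < k < n -> #|[set w | x w < k]| < k.

Let y := add_grain x i.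

(* Each vertex of T has toppled once: it lost n grains and received one from
   every other vertex of T. *)
Definition toppled (T : {set 'I_n}) : config n :=
  [ffun w => if w \in T then y w + #|T| - n.+1 else y w + #|T|].

Let y_i : y i = n.
Proof. by rewrite /y ffunE eqxx x_i addn1 prednK // (leq_ltn_trans _ (ltn_ord i)). Qed.

Let y_ne w : w != i -> y w = x w.
Proof. by move=> H; rewrite /y ffunE (negbTE H) addn0. Qed.

Lemma asm_topple_toppled (T : {set 'I_n}) w : w \notin T -> n <= y w + #|T| ->
  (forall u, u \in T -> n < y u + #|T|) -> asm_topple (toppled T) (toppled (w |: T)).
Proof.
move=> HwT Hw HT; exists w; split; first by rewrite ffunE (negbTE HwT).
apply/ffunP => j; rewrite !ffunE cardsU1 HwT add1n !inE.
have [->|Hjw] /= := eqVneq j w; first by move: Hw; rewrite (negbTE HwT) /y ffunE; lia.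
by case: (boolP (j \in T)) => HjT; [have := HT j HjT; rewrite /y ffunE|];
  set t := #|T|; lia.
Qed.

Lemma toppled_unstable (T : {set 'I_n}) : T != setT ->
  exists2 w, w \notin T & n <= y w + #|T|.
Proof.
move=> HT; case: (pickP [pred w | (w \notin T) && (n <= y w + #|T|)]).
  by move=> w /andP [H1 H2]; exists w.
move=> Hnone; exfalso.
have [HiT|HiT] := boolP (i \in T); last by have := Hnone i; rewrite /= HiT y_i leq_addr.
have HTn : #|T| < n.
  have := max_card (mem T); rewrite card_ord leq_eqVlt => /orP [/eqP HTn|//].
  by move: HT; rewrite eqEcard subsetT cardsT card_ord HTn leqnn.
have HT0 : 0 < #|T| by apply/card_gt0P; exists i.
have Hsub : ~: T \subset [set w | x w < n - #|T|].
  apply/subsetP => w; rewrite !inE => HwT; have := Hnone w; rewrite /= HwT /=.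
  have Hwi : w != i by apply: contraNneq HwT => ->.
  by rewrite y_ne // => /negbT; rewrite -ltnNge; lia.
have := subset_leq_card Hsub; have := cardsC T; rewrite card_ord.
have := x_strict (k := n - #|T|); set t := #|T|; set t2 := #|~: T|; set t3 := #|_|; lia.
Qed.

Lemma toppled_reach_all (T : {set 'I_n}) :
  (forall u, u \in T -> n < y u + #|T|) ->
  star (@asm_topple n) (toppled T) (toppled setT).
Proof.
move Hm : #|~: T| => m; elim: m T Hm => [|m IH] T Hm HT.
  suff -> : T = setT by exact: star_refl.
  by move/eqP: Hm; rewrite cards_eq0 -setCT (inj_eq (@setC_inj _)) => /eqP.
have HT' : T != setT by apply: contra_eqN Hm => /eqP ->; rewrite setCT cards0.
have [w HwT Hw] := toppled_unstable HT'.
apply: star_step (asm_topple_toppled HwT Hw HT) (IH _ _ _).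
  have -> : ~: (w |: T) = (~: T) :\ w by apply/setP => u; rewrite !inE negb_or.
  by move: Hm; rewrite (cardsD1 w (~: T)) inE HwT add1n => -[].
move=> u; rewrite cardsU1 HwT add1n !inE => /orP [/eqP ->|Hu].
  by rewrite addnS ltnS.
by rewrite addnS ltnS ltnW // HT.
Qed.

Lemma avalanche :
  chain_step (@asm_topple n) x [ffun w => if w == i then x w else (x w).-1].
Proof.
exists i; split; last first.
  move=> w; rewrite ffunE; case: eqP => _; first exact: x_stable.
  exact: leq_trans (leq_pred _) (x_stable w).
have -> : add_grain x i = toppled set0.
  by apply/ffunP => w; rewrite !ffunE in_set0 cards0 !addn0.
have -> : [ffun w => if w == i then x w else (x w).-1] = toppled setT.
  apply/ffunP => w; rewrite !ffunE inE cardsT card_ord.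
  by case: eqVneq => _ /=; lia.
by apply: toppled_reach_all => u; rewrite in_set0.
Qed.

End Avalanche.

Lemma parking_reach c : stable c -> parking c ->
  star (chain_step (@asm_topple n)) (cmax n) c.
Proof.
move Hm : (csum (cmax n) - csum c) => m.
elim/ltn_ind: m c Hm => m IH c Hm Hs HP.
case: (pickP (fun w => c w < n.-1)) => [w0 Hw0|Hnone]; last first.
  suff -> : c = cmax n by exact: star_refl.
  by apply/ffunP => w; rewrite ffunE; apply/eqP; rewrite eqn_leq Hs leqNgt Hnone.
have [i Hi] := parking_top (leq_ltn_trans (leq0n _) (ltn_ord w0)) Hs HP.
pose x : config n := [ffun w => if w == i then n.-1 else minn (c w).+1 n.-1].
have x_count k : k <= n.-1 -> #|[set w | x w < k]| <= k.-1.
  move=> Hkn; apply: leq_trans (parkingP _ HP k.-1).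
  by apply/subset_leq_card/subsetP => w; rewrite !inE ffunE; case: eqP => _; lia.
have Hxs : stable x by move=> w; rewrite ffunE; case: eqP => _ //; exact: geq_minr.
have Hxi : x i = n.-1 by rewrite ffunE eqxx.
have HxP : parking x.
  apply/parkingP => k; have [Hkn|Hkn] := leqP k n.-1.
    exact: leq_trans (x_count k Hkn) (leq_pred _).
  by apply: leq_trans (max_card _) _; rewrite card_ord; lia.
have Hx_strict k : 0 < k < n -> #|[set w | x w < k]| < k.
  by case/andP => Hk0 Hkn; apply: leq_ltn_trans (x_count k _) _; lia.
have Hcx w : c w <= x w.
  by rewrite ffunE; case: eqP => [->|_]; [rewrite Hi | have := Hs w; lia].
have Hw0x : c w0 < x w0.
  by rewrite ffunE; case: eqP => [E|_]; [move: Hw0; rewrite E Hi ltnn | lia].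
have Hxmax : csum x <= csum (cmax n).
  by apply: leq_sum => w _; rewrite [X in _ <= X]ffunE; exact: Hxs.
apply: star_trans (IH _ _ x erefl Hxs HxP) _; first by have := csum_ltn Hcx Hw0x; lia.
apply: star_step (avalanche Hxs Hxi Hx_strict) (reach_by_adding_grains _ Hs _) => w.
rewrite ffunE; have [->|Hwi] := eqVneq w i; first by rewrite Hxi Hi.
by rewrite ffunE (negbTE Hwi); have := Hs w; lia.
Qed.

Lemma parking_DR c : stable c -> parking c -> DR c.
Proof. by move=> Hs HP; apply/recurrent_from_cmax; split; last exact: parking_reach. Qed.

End Parking.

Section Dropping.
Variable n : nat.
Implicit Types (c d x : config n) (r : rel 'I_n).

Lemma ssm_shed m d (B : {set 'I_n}) : #|B| = m -> (forall w, w \in B -> n <= d w) ->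
  star (@ssm_topple n) d [ffun w => if w \in B then d w - 1 else d w].
Proof.
elim: m d B => [|m IH] d B Hm HB.
  suff -> : [ffun w => if w \in B then d w - 1 else d w] = d by exact: star_refl.
  by apply/ffunP => w; move/eqP: Hm; rewrite cards_eq0 => /eqP ->; rewrite ffunE in_set0.
have [w Hw] : exists w, w \in B by apply/card_gt0P; rewrite Hm.
pose d' : config n := [ffun j => if j == w then d j - 1 else d j].
have Hdd' : ssm_topple d d'.
  exists w, set0, true; split; rewrite ?HB ?inE //.
  by apply/ffunP => j; rewrite !ffunE cards0 in_set0 addn0.
apply: star_step Hdd' _.
have -> : [ffun u => if u \in B then d u - 1 else d u] =
          [ffun u => if u \in B :\ w then d' u - 1 else d' u].
  by apply/ffunP => u; rewrite !ffunE !inE; case: eqVneq => [->|]; rewrite ?Hw.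
apply: IH => [|u]; first by move: Hm; rewrite (cardsD1 w B) Hw add1n => -[].
by rewrite !inE ffunE => /andP [/negbTE -> Hu]; exact: HB.
Qed.

Lemma ssm_drop x i (S : {set 'I_n}) : stable x -> x i = n.-1 -> i \notin S ->
  chain_step (@ssm_topple n) x [ffun w => if w == i then n.-1 - #|S|
                                 else if w \in S then minn (x w).+1 n.-1 else x w].
Proof.
move=> Hs Hxi HiS; exists i; split; last first.
  move=> w; rewrite ffunE; case: eqP => _; first exact: leq_subr.
  by case: (w \in S); [exact: geq_minr | exact: Hs].
pose d : config n := [ffun j => if j == i then add_grain x i j - (#|S| + true)
                                else add_grain x i j + (j \in S)].
have Hd : ssm_topple (add_grain x i) d.
  by exists i, S, true; split; rewrite // ffunE eqxx Hxi; have := ltn_ord i; lia.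
apply: star_step Hd _.
(* the vertices of S that were full shed their extra grain into the sink *)
pose B := [set w in S | x w == n.-1].
have HB w : w \in B -> n <= d w.
  rewrite !inE => /andP [HwS /eqP Hw]; have Hwi : w != i by apply: contraNneq HiS => <-.
  by rewrite !ffunE (negbTE Hwi) HwS Hw addn0; lia.
suff -> : [ffun w => if w == i then n.-1 - #|S|
           else if w \in S then minn (x w).+1 n.-1 else x w] =
          [ffun w => if w \in B then d w - 1 else d w] by exact: ssm_shed erefl HB.
apply/ffunP => w; rewrite !ffunE !inE.
have [->|Hwi] /= := eqVneq w i; first by rewrite (negbTE HiS) /= Hxi; lia.
case: (w \in S) => /=; last by rewrite !addn0.
by have := Hs w; case: eqVneq => [->|]; lia.
Qed.

Definition tournament r := irreflexive r /\ forall u v, u != v -> r u v = ~~ r v u.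

Definition score r : config n := [ffun v => #|[set w | r v w]|].

(* The configuration reached from [cmax] once the vertices [0, ..., j-1] have
   been dropped: they carry their score in the subtournament they span, the
   others are still full. *)
Definition prefix_score r j : config n :=
  [ffun v : 'I_n => if v < j then #|[set w : 'I_n | (w < j) && r v w]| else n.-1].

Lemma card_wins_before_le r k v : irreflexive r ->
  #|[set w : 'I_n | (w < k) && r v w]| <= n.-1.
Proof.
move=> Hirr; have <- : #|[set~ v]| = n.-1 by rewrite cardsC1 card_ord.
apply/subset_leq_card/subsetP => w; rewrite !inE => /andP [_].
by apply: contraTneq => ->; rewrite Hirr.
Qed.

Lemma card_wins_beforeS r (j : 'I_n) v :
  #|[set w : 'I_n | (w < j.+1) && r v w]| = #|[set w : 'I_n | (w < j) && r v w]| + r v j.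
Proof.
rewrite (cardsD1 j) inE ltnSn /= addnC; congr (_ + _); apply: eq_card => w; rewrite !inE.
have [->|Hw] /= := eqVneq w j; first by rewrite ltnn.
by rewrite ltnS leq_eqVlt val_eqE (negbTE Hw).
Qed.

Lemma prefix_score_step r (j : 'I_n) : tournament r ->
  chain_step (@ssm_topple n) (prefix_score r j) (prefix_score r j.+1).
Proof.
move=> [Hirr Hant].
(* [j] drops a grain on every later vertex and on every earlier vertex beating it *)
pose S := [set w | (w != j) && ((j < w) || r w j)].
have Hs : stable (prefix_score r j).
  by move=> v; rewrite ffunE; case: ifP => // _; exact: card_wins_before_le.
have Hj : prefix_score r j j = n.-1 by rewrite ffunE ltnn.
have HjS : j \notin S by rewrite inE eqxx.
suff <- : [ffun w => if w == j then n.-1 - #|S| else if w \in S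
          then minn (prefix_score r j w).+1 n.-1 else prefix_score r j w] =
          prefix_score r j.+1 by exact: ssm_drop.
apply/ffunP => v; rewrite !ffunE.
have [->|Hv] := eqVneq v j.
  have E1 : [set~ j] :&: S = S by apply/setP => w; rewrite !inE; case: (w == j).
  have E2 : [set~ j] :\: S = [set w : 'I_n | (w < j.+1) && r j w].
    apply/setP => w; rewrite !inE.
    have [->|Hw] /= := eqVneq w j; first by rewrite Hirr andbF.
    by rewrite (Hant _ _ Hw) ltnS; case: leqP => _; case: (r j w).
  have := cardsID S [set~ j]; rewrite E1 E2 cardsC1 card_ord ltnSn.
  by set a := #|S|; set b := #|_|; lia.
rewrite inE Hv /=; case: (ltngtP v j) => Hvj /=.
- rewrite ltnS (ltnW Hvj) card_wins_beforeS.
  have := card_wins_before_le j.+1 v Hirr; rewrite card_wins_beforeS.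
  by case: (r v j) => /=; rewrite ?addn0 //; set a := #|_|; lia.
- by rewrite ltnS leqNgt Hvj /=; apply/minn_idPr.
- by move: Hv; rewrite -val_eqE /= Hvj eqxx.
Qed.

Lemma prefix_score_reach r j : tournament r -> j <= n ->
  star (chain_step (@ssm_topple n)) (cmax n) (prefix_score r j).
Proof.
move=> Hr; elim: j => [|j IH] Hj.
  suff -> : prefix_score r 0 = cmax n by exact: star_refl.
  by apply/ffunP => v; rewrite !ffunE.
exact: star_trans (IH (ltnW Hj)) (star_one (prefix_score_step (Ordinal Hj) Hr)).
Qed.

Lemma SR_of_score_le r c : tournament r -> stable c ->
  (forall v, score r v <= c v) -> SR c.
Proof.
move=> Hr Hs Hle; apply/recurrent_from_cmax; split => //.
apply: star_trans (prefix_score_reach Hr (leqnn n)) (reach_by_adding_grains _ Hs _) => v.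
rewrite ffunE ltn_ord; apply: leq_trans (Hle v); rewrite ffunE.
by apply/subset_leq_card/subsetP => w; rewrite !inE ltn_ord.
Qed.

End Dropping.

Section Spread.
Variable n : nat.
Implicit Types (c : config n) (u v : 'I_n).

Definition spread c u v : config n :=
  [ffun w => if w == u then (c u).+1 else if w == v then (c v).-1 else c w].

Definition sqsum c := \sum_(w < n) c w ^ 2.

Lemma spread_stable c u v : stable c -> u != v -> (c u).+1 <= n.-1 ->
  stable (spread c u v).
Proof.
move=> Hs Huv Hu w; rewrite ffunE; case: eqP => // _; case: eqP => _ //.
exact: leq_trans (leq_pred _) (Hs v).
Qed.

Section EqualPair.
Variables (c : config n) (u v : 'I_n).
Hypotheses (Huv : u != v) (Ec : c u = c v) (Hc : 0 < c u).

Lemma sum_spread (A : {set 'I_n}) :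
  \sum_(w in A) spread c u v w + (v \in A) = \sum_(w in A) c w + (u \in A).
Proof.
rewrite -!sum_eq_mem -!big_split /=; apply: eq_bigr => w _; rewrite ffunE.
have [->|Hwu] := eqVneq w u; first by rewrite (negbTE Huv) addn0 addn1.
by have [->|//] := eqVneq w v; rewrite -Ec; lia.
Qed.

Lemma landau_spread : landau c -> landau (spread c u v).
Proof.
move=> Hl A; have HA := sum_spread A.
have [HvA|HvA] := boolP (v \in A); last first.
  by apply: leq_trans (Hl A) _; move: HA; rewrite (negbTE HvA); lia.
have [HuA|HuA] := boolP (u \in A).
  by apply: leq_trans (Hl A) _; move: HA; rewrite HvA HuA; lia.
(* average the Landau conditions for [A :\ v] and [u |: A] *)
move: HA; rewrite HvA (negbTE HuA) [\sum_(w in A) c w](big_setD1 v HvA) /= -Ec.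
have := Hl (A :\ v); have := Hl (u |: A).
rewrite big_setU1 //= cardsU1 HuA (big_setD1 v HvA) /= -Ec [#|A|](cardsD1 v) HvA.
rewrite !binS !bin1 bin0.
by set S := \sum_(w in A) _; set s := \sum_(w in A :\ v) c w; set m := #|A :\ v|; lia.
Qed.

Lemma sqsum_spread : sqsum (spread c u v) = (sqsum c).+2.
Proof.
have Hvu : v != u by rewrite eq_sym.
rewrite /sqsum (bigD1 u) //= [in RHS](bigD1 u) //= (bigD1 v) //= [in RHS](bigD1 v) //=.
rewrite (eq_bigr (fun w => c w ^ 2)) => [|w /andP [/negbTE Hwu /negbTE Hwv]]; last first.
  by rewrite ffunE Hwu Hwv.
rewrite !ffunE eqxx (negbTE Hvu) eqxx -Ec.
set s := \sum_(i < n | _) _; case: (c u) Hc => // a _ /=; lia.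
Qed.

Lemma spread_swap_sum w : spread c u v w + spread c v u w = 2 * c w.
Proof.
rewrite !ffunE; have [->|Hwu] := eqVneq w u; first by rewrite (negbTE Huv); lia.
by have [->|Hwv] /= := eqVneq w v; [rewrite -Ec|]; lia.
Qed.

End EqualPair.

Lemma sqsum_le_stable c : stable c -> sqsum c <= n * n.-1 ^ 2.
Proof.
move=> Hs; rewrite -[n in n * _]card_ord -sum_nat_const.
by apply: leq_sum => w _; rewrite leq_exp2r.
Qed.

Lemma landau_not_parking_pair c : stable c -> landau c -> ~~ parking c ->
  exists u v, [/\ u != v, c u = c v, 0 < c u & (c u).+1 <= n.-1].
Proof.
move=> Hs Hl /parkingPn [k Hk]; set L := [set w | c w < k] in Hk.
case: (pickP [pred p : 'I_n * 'I_n |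
               [&& p.1 \in L, p.2 \in L, p.1 != p.2 & c p.1 == c p.2]])
  => [[u v] /and4P [Hu Hv Huv /eqP E]|Hnone]; last first.
  suff : #|L| <= k by rewrite leqNgt Hk.
  apply: (@card_le_inj_bound _ _ c) => [w1 w2 H1 H2 E|w]; last by rewrite inE.
  by apply/eqP; apply: contraFT (Hnone (w1, w2)) => Hne; rewrite /= H1 H2 Hne E eqxx.
exists u, v; split => //.
  rewrite lt0n; apply: contraTneq (Hl [set u; v]) => H0.
  by rewrite cards2 Huv big_setU1 ?inE //= big_set1 -E H0.
have HL : #|L| <= n by have := max_card (mem L); rewrite card_ord.
by move: Hk HL Hu; rewrite inE /=; set l := #|L|; lia.
Qed.

Lemma landau_ind (P : config n -> Prop) :
  (forall c, stable c -> parking c -> P c) ->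
  (forall c u v, u != v -> c u = c v -> 0 < c u ->
     P (spread c u v) -> P (spread c v u) -> P c) ->
  forall c, stable c -> landau c -> P c.
Proof.
move=> Hbase Hstep c; move Hm : (n * n.-1 ^ 2 - sqsum c) => m.
elim/ltn_ind: m c Hm => m IH c Hm Hs Hl.
have [HP|HP] := boolP (parking c); first exact: Hbase.
have [u [v [Huv Ec Hc Hu]]] := landau_not_parking_pair Hs Hl HP.
have Hvu : v != u by rewrite eq_sym.
have IHspread a b : a != b -> c a = c b -> c a = c u -> P (spread c a b).
  move=> Hab Eab Eau; have Ha : 0 < c a by rewrite Eau.
  have Hs' : stable (spread c a b) by apply: spread_stable; rewrite ?Eau.
  apply: (IH _ _ _ erefl Hs' (landau_spread Hab Eab Ha Hl)).
  by have := sqsum_spread Hab Eab Ha; have := sqsum_le_stable Hs'; lia.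
exact: Hstep Huv Ec Hc (IHspread u v Huv Ec erefl) (IHspread v u Hvu (esym Ec) (esym Ec)).
Qed.

End Spread.

Section LandauTournament.
Variable n : nat.
Implicit Types (r : rel 'I_n) (c : config n).

Definition flip r a b : rel 'I_n :=
  fun x y => if (x == a) && (y == b) then false
             else if (x == b) && (y == a) then true else r x y.

Lemma flip_tournament r a b : tournament r -> a != b -> tournament (flip r a b).
Proof.
move=> [Hirr Hant] Hab; have Hba : b != a by rewrite eq_sym.
split=> [x|x y Hxy]; rewrite /flip.
  by case: eqVneq => [->|]; rewrite ?(negbTE Hab) ?Hirr //= andbF.
case: (boolP ((x == a) && (y == b))) => [/andP [/eqP -> /eqP ->]|H1].
  by rewrite !eqxx (negbTE Hba).
case: (boolP ((x == b) && (y == a))) => [/andP [/eqP -> /eqP ->]|H2].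
  by rewrite !eqxx (negbTE Hba).
by rewrite andbC (negbTE H2) andbC (negbTE H1) Hant.
Qed.

Lemma score_flip_l r a b : a != b -> r a b -> score (flip r a b) a = (score r a).-1.
Proof.
move=> Hab Hrab; rewrite !ffunE [in RHS](cardsD1 b) inE Hrab add1n /=.
apply: eq_card => w; rewrite !inE /flip eqxx /=.
by have [->|Hwb] //= := eqVneq w b; rewrite (negbTE Hab).
Qed.

Lemma score_flip_r r a b : tournament r -> a != b -> r a b ->
  score (flip r a b) b = (score r b).+1.
Proof.
move=> [_ Hant] Hab Hrab; have Hba : b != a by rewrite eq_sym.
rewrite !ffunE (cardsD1 a) inE /flip (negbTE Hba) !eqxx add1n; congr _.+1.
apply: eq_card => w; rewrite !inE /=.
by have [->|Hwa] //= := eqVneq w a; rewrite Hant // Hrab.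
Qed.

Lemma score_flip_other r a b x : x != a -> x != b -> score (flip r a b) x = score r x.
Proof.
move=> Hxa Hxb; rewrite !ffunE; apply: eq_card => w.
by rewrite !inE /flip (negbTE Hxa) (negbTE Hxb).
Qed.

Lemma tournament_shift r u v : tournament r -> u != v -> score r v <= score r u ->
  exists2 r', tournament r' &
    [/\ score r' u = (score r u).-1, score r' v = (score r v).+1 &
        forall x, x != u -> x != v -> score r' x = score r x].
Proof.
move=> Hr Huv Hvu_score; have [Hirr Hant] := Hr; have Hvu : v != u by rewrite eq_sym.
have [Hruv|Hrvu] := boolP (r u v).
  exists (flip r u v); first exact: flip_tournament.
  by split=> [||x]; [exact: score_flip_l | exact: score_flip_r | exact: score_flip_other].
rewrite Hant // negbK in Hrvu.
(* some [w] beaten by [u] but not by [v], since [v] beats [u] and has no more wins *)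
have [w /andP [Hruw Hnrvw]] : exists w, r u w && ~~ r v w.
  case: (pickP (fun w => r u w && ~~ r v w)) => [w Hw|Hnone]; first by exists w.
  have Hsub : [set y | r u y] \subset [set y | r v y] :\ u.
    apply/subsetP => y; rewrite !inE => Hruy.
    move: (Hnone y); rewrite /= Hruy /= => /negbFE ->.
    by rewrite andbT; apply: contraTneq Hruy => ->; rewrite Hirr.
  move: (subset_leq_card Hsub) Hvu_score (cardsD1 u [set y | r v y]).
  rewrite !ffunE inE Hrvu; set a := #|[set y | r u y]|; set b := #|[set y | r v y]|.
  by set b' := #|_ :\ _|; lia.
have Hwu : w != u by apply: contraTneq Hruw => ->; rewrite Hirr.
have Hwv : w != v by apply: contraTneq Hruw => ->; rewrite Hant // Hrvu.
have Hrwv : r w v by rewrite Hant // Hnrvw.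
have Huw : u != w by rewrite eq_sym.
have Hvw : v != w by rewrite eq_sym.
pose r1 := flip r u w; have Hr1 : tournament r1 := flip_tournament Hr Huw.
have Hr1wv : r1 w v by rewrite /r1 /flip (negbTE Hwu) (negbTE Hvu) !andbF.
exists (flip r1 w v); first exact: flip_tournament.
split=> [||x Hxu Hxv].
- by rewrite score_flip_other // score_flip_l.
- by rewrite score_flip_r // score_flip_other.
- have [->|Hxw] := eqVneq x w; last by rewrite !score_flip_other.
  by rewrite score_flip_l // score_flip_r.
Qed.

Lemma parking_tournament c : parking c ->
  exists2 r, tournament r & forall v, score r v <= c v.
Proof.
move=> /parkingP HP.
exists [rel u v | (c v < c u) || ((c v == c u) && (v < u))].
  split=> [u|u v Huv] /=; first by rewrite ltnn eqxx ltnn.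
  case: ltngtP => //= _; case: ltngtP => // E.
  by move: Huv; rewrite (val_inj E) eqxx.
move=> u; rewrite ffunE.
apply: (@leq_trans #|[set w | c w < (c u).+1] :\ u|).
  apply/subset_leq_card/subsetP => w; rewrite !inE.
  case/orP => [H|/andP [/eqP E Hwu]].
    by rewrite ltnS ltnW // andbT; apply: contraTneq H => ->; rewrite ltnn.
  by rewrite E ltnSn andbT; apply: contraTneq Hwu => ->; rewrite ltnn.
by have := HP (c u).+1; rewrite (cardsD1 u) inE ltnSn add1n.
Qed.

Lemma landau_tournament c : stable c -> landau c ->
  exists2 r, tournament r & forall v, score r v <= c v.
Proof.
move: c; apply: landau_ind => [c _|c u v Huv Ec Hc [r Hr Hle] _].
  exact: parking_tournament.
have Hu := Hle u; have Hv := Hle v; rewrite [X in _ <= X]ffunE eqxx in Hu.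
rewrite [X in _ <= X]ffunE eqxx eq_sym (negbTE Huv) in Hv.
have Ho x : x != u -> x != v -> score r x <= c x.
  by move=> Hxu Hxv; have := Hle x; rewrite [X in _ <= X]ffunE (negbTE Hxu) (negbTE Hxv).
have [Hru|Hru] := leqP (score r u) (c u).
  exists r => // x; have [->//|Hxu] := eqVneq x u.
  have [->|Hxv] := eqVneq x v; [exact: leq_trans Hv (leq_pred _) | exact: Ho].
have Hvu : score r v <= score r u by lia.
have [r' Hr' [Eu Ev Eo]] := tournament_shift Hr Huv Hvu.
exists r' => // x; have [->|Hxu] := eqVneq x u; first by rewrite Eu; lia.
have [->|Hxv] := eqVneq x v; first by rewrite Ev; lia.
by rewrite Eo //; exact: Ho.
Qed.

End LandauTournament.

Section ConvexHull.
Variables (R : realType) (n : nat).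
Implicit Types (c d : config n).
Local Open Scope ring_scope.

Lemma DR_in_conv_DR c : DR c -> in_conv_DR R c.
Proof.
move=> Hc; exists 1%N, (fun _ => c), (fun _ => 1); split => //.
- by move=> _; rewrite lexx ler01.
- by rewrite big_ord1.
- by move=> v; rewrite big_ord1 mul1r.
Qed.

Lemma in_conv_DR_midpoint c a b : in_conv_DR R a -> in_conv_DR R b ->
  (forall w, a w + b w = 2 * c w)%N -> in_conv_DR R c.
Proof.
move=> [k1 [cs1 [lam1 [D1 L1 S1 V1]]]] [k2 [cs2 [lam2 [D2 L2 S2 V2]]]] Hab.
exists (k1 + k2)%N, (fun l => match split l with inl l1 => cs1 l1 | inr l2 => cs2 l2 end),
  (fun l => match split l with inl l1 => lam1 l1 / 2 | inr l2 => lam2 l2 / 2 end).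
have split_l (l : 'I_k1) : split (lshift k2 l) = inl l := unsplitK (inl l).
have split_r (l : 'I_k2) : split (rshift k1 l) = inr l := unsplitK (inr l).
split.
- by move=> l; case: (split l).
- by move=> l; case: (split l) => l'; [case/andP: (L1 l') | case/andP: (L2 l')];
    move=> H0 H1; apply/andP; split; lra.
- rewrite big_split_ord /=.
  under eq_bigr => l _ do rewrite split_l.
  under [X in _ + X]eq_bigr => l _ do rewrite split_r.
  by rewrite -!mulr_suml S1 S2; lra.
- move=> w; rewrite big_split_ord /=.
  under eq_bigr => l _ do rewrite split_l mulrAC.
  under [X in _ + X]eq_bigr => l _ do rewrite split_r mulrAC.
  rewrite -!mulr_suml -V1 -V2.
  have : (a w)%:R + (b w)%:R = 2 * (c w)%:R :> R by rewrite -natrD Hab natrM.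
  lra.
Qed.

Lemma in_conv_DR_sum_bounds c (A : {set 'I_n}) (lo hi : nat) :
  (forall d, DR d -> lo <= \sum_(v in A) d v <= hi)%N ->
  in_conv_DR R c -> (lo <= \sum_(v in A) c v <= hi)%N.
Proof.
move=> Hb [k [cs [lam [HD HL HS HV]]]].
have Hlam l : 0 <= lam l by case/andP: (HL l).
have E : (\sum_(v in A) c v)%:R = \sum_(l < k) lam l * (\sum_(v in A) cs l v)%:R :> R.
  rewrite natr_sum (eq_bigr _ (fun v _ => HV v)) exchange_big /=.
  by apply: eq_bigr => l _; rewrite natr_sum mulr_sumr.
have Hconst (m : nat) : m%:R = \sum_(l < k) lam l * m%:R :> R.
  by rewrite -mulr_suml HS mul1r.
rewrite -!(ler_nat R) E [lo%:R]Hconst [hi%:R]Hconst.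
have Hbl l : (lo <= \sum_(v in A) cs l v)%N && (\sum_(v in A) cs l v <= hi)%N.
  exact: Hb (HD l).
by apply/andP; split; apply: ler_sum => l _; apply: ler_wpM2l => //;
  rewrite ler_nat; case/andP: (Hbl l).
Qed.

Lemma in_conv_DR_landau c : in_conv_DR R c -> stable c /\ landau c.
Proof.
move=> Hc; have DR_stable_landau d : DR d -> stable d /\ landau d.
  by move=> Hd; split; [case: Hd | exact: landau_recurrent (@asm_ssm_topple n) Hd].
split=> [v|A].
  have : (0 <= \sum_(w in [set v]) c w <= n.-1)%N.
    apply: in_conv_DR_sum_bounds Hc => d /DR_stable_landau [Hs _].
    by rewrite big_set1 Hs.
  by rewrite big_set1.
have : ('C(#|A|, 2) <= \sum_(w in A) c w <= #|A| * n.-1)%N.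
  apply: in_conv_DR_sum_bounds Hc => d /DR_stable_landau [Hs Hl].
  by rewrite Hl -sum_nat_const; apply: leq_sum => w _; exact: Hs.
by case/andP.
Qed.

Lemma landau_in_conv_DR c : stable c -> landau c -> in_conv_DR R c.
Proof.
move: c; apply: landau_ind => [c Hs HP|c u v Huv Ec Hc Huv_conv Hvu_conv].
  exact/DR_in_conv_DR/parking_DR.
by apply: in_conv_DR_midpoint Huv_conv Hvu_conv _ => w; exact: spread_swap_sum.
Qed.

End ConvexHull.

Theorem theorem4p1 (R : realType) (n : nat) (hn : (1 <= n)%N) (c : config n) :
  SR c <-> in_conv_DR R c.
Proof.
split=> [HSR|Hconv].
  apply: landau_in_conv_DR; first by case: HSR.
  exact: landau_recurrent (fun _ _ H => H) HSR.
have [Hs Hl] := in_conv_DR_landau Hconv.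
have [r Hr Hscore] := landau_tournament Hs Hl.
exact: SR_of_score_le Hr Hs Hscore.
Qed.
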